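(* Let $p/q$ be a positive rational in lowest terms ($p,q\ge1$), and write $p=p_1^2+p_2^2+p_3^2+p_4^2$ with integers $p_j\ge0$. Put $A=p_1^2-p_2^2+p_3^2-p_4^2$, $B=p_1p_2+p_3p_4$, $C=p_1p_4-p_2p_3$. Then there exist integers $a,b,\gamma$ such that $$\Delta:=bA+2(\gamma-a)B+(1-b^2+4a\gamma)C$$ is relatively prime to $q$.
   Context: Equivalently, $\Delta=r_1r_4-r_2r_3$ where $r_1=-p_1-2\gamma p_3+bp_4$, $r_2=p_2+2ap_4-bp_3$, $r_3=p_3-2\gamma p_1+bp_2$, $r_4=-p_4+2ap_2-bp_1$. *)

From Stdlib Require Import ZArith.
Open Scope Z_scope.

Definition qA (p1 p2 p3 p4 : Z) : Z := p1^2 - p2^2 + p3^2 - p4^2.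
Definition qB (p1 p2 p3 p4 : Z) : Z := p1*p2 + p3*p4.
Definition qC (p1 p2 p3 p4 : Z) : Z := p1*p4 - p2*p3.

Definition Delta (p1 p2 p3 p4 a b g : Z) : Z :=
  b * qA p1 p2 p3 p4 + 2 * (g - a) * qB p1 p2 p3 p4
  + (1 - b^2 + 4*a*g) * qC p1 p2 p3 p4.

From Stdlib Require Import ZArith Znumtheory Lia.
Open Scope Z_scope.

(* Delta is a polynomial in (a, b, gamma) with integer coefficients, so its
   values respect congruences, and by the Chinese remainder theorem it is
   enough to find, for each prime l dividing q, one point where l does not
   divide Delta.  Locally this comes from the identity
   A^2 + (2B)^2 + 4C^2 = p^2: the values of Delta at (0,1,0), (0,0,0) and
   (0,0,1) are A, C and 2B + C, so a prime dividing all three divides p,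
   which is impossible when p and q are coprime. *)

Lemma exists_prime_divisor (n : Z) : 1 < n -> exists l, prime l /\ (l | n).
Proof.
  intros Hn. assert (Hn0 : 0 <= n) by lia. revert Hn.
  pattern n; apply Z_lt_induction; [|exact Hn0]. clear n Hn0.
  intros n IH Hn.
  destruct (prime_dec n) as [Hp | Hp].
  - exists n. split; [exact Hp | apply Z.divide_refl].
  - destruct (not_prime_divide n Hn Hp) as [m [Hm Hmn]].
    destruct (IH m ltac:(lia) ltac:(lia)) as [l [Hl Hlm]].
    exists l. split; [exact Hl | exact (Z.divide_trans _ _ _ Hlm Hmn)].
Qed.

Lemma rel_prime_add_mult (u k m : Z) : rel_prime u m -> rel_prime (u + k * m) m.
Proof.
  rewrite <- !Zgcd_1_rel_prime, !(Z.gcd_comm _ m), Z.gcd_add_mult_diag_r.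
  trivial.
Qed.

Lemma prime_rel_prime_iff (l u : Z) : prime l -> rel_prime u l <-> ~ (l | u).
Proof.
  intros Hl. split.
  - intros Hul Hlu. pose proof (prime_ge_2 l Hl).
    assert (Hl1 : (l | 1)).
    { apply Zgcd_1_rel_prime in Hul.
      rewrite <- Hul. apply Z.gcd_greatest; [exact Hlu | apply Z.divide_refl]. }
    apply Z.divide_pos_le in Hl1; lia.
  - intros Hlu. exact (rel_prime_sym _ _ (prime_rel_prime l Hl u Hlu)).
Qed.

Section CongruenceRespectingMaps.

Variable f : Z -> Z -> Z -> Z.

Hypothesis f_congr : forall m a b g x y z,
  (m | f (a + m * x) (b + m * y) (g + m * z) - f a b g).

Lemma rel_prime_shift (m a b g x y z : Z) :
  rel_prime (f a b g) m -> rel_prime (f (a + m * x) (b + m * y) (g + m * z)) m.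
Proof.
  intros H. destruct (f_congr m a b g x y z) as [k Hk].
  replace (f (a + m * x) (b + m * y) (g + m * z)) with (f a b g + k * m) by lia.
  exact (rel_prime_add_mult _ _ _ H).
Qed.

(* Chinese remainder theorem: with u m + v l = 1, the point
   c0 + m u (c1 - c0) = c1 - l v (c1 - c0) is congruent to c0 mod m and to
   c1 mod l in each coordinate. *)
Lemma rel_prime_value_mul (l m : Z) : rel_prime l m ->
  (exists a b g, rel_prime (f a b g) l) ->
  (exists a b g, rel_prime (f a b g) m) ->
  exists a b g, rel_prime (f a b g) (l * m).
Proof.
  intros Hlm [a1 [b1 [g1 H1]]] [a0 [b0 [g0 H0]]].
  destruct (rel_prime_bezout _ _ (rel_prime_sym _ _ Hlm)) as [u v Huv].
  assert (Hcrt : forall c0 c1, c0 + m * (u * (c1 - c0)) = c1 + l * (- v * (c1 - c0))).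
  { intros c0 c1.
    assert (E : c0 + m * (u * (c1 - c0)) - (c1 + l * (- v * (c1 - c0)))
                = (u * m + v * l - 1) * (c1 - c0)) by ring.
    rewrite Huv, Z.sub_diag, Z.mul_0_l in E. lia. }
  exists (a0 + m * (u * (a1 - a0))), (b0 + m * (u * (b1 - b0))),
         (g0 + m * (u * (g1 - g0))).
  apply rel_prime_mult.
  - rewrite !Hcrt. exact (rel_prime_shift _ _ _ _ _ _ _ H1).
  - exact (rel_prime_shift _ _ _ _ _ _ _ H0).
Qed.

Lemma rel_prime_value_of_prime_divisors (n : Z) : 1 <= n ->
  (forall l, prime l -> (l | n) -> exists a b g, ~ (l | f a b g)) ->
  exists a b g, rel_prime (f a b g) n.
Proof.
  intros Hn. assert (Hn0 : 0 <= n) by lia. revert Hn.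
  pattern n; apply Z_lt_induction; [|exact Hn0]. clear n Hn0.
  intros n IH Hn Hlocal.
  destruct (Z.eq_dec n 1) as [-> | Hn1].
  { exists 0, 0, 0. apply rel_prime_sym, rel_prime_1. }
  destruct (exists_prime_divisor n ltac:(lia)) as [l [Hl [m Hm]]].
  pose proof (prime_ge_2 l Hl).
  assert (Hm_local : forall l', prime l' -> (l' | m) -> exists a b g, ~ (l' | f a b g)).
  { intros l' Hl' Hl'm. apply Hlocal; [exact Hl'|].
    rewrite Hm. exact (Z.divide_mul_l _ _ _ Hl'm). }
  destruct (IH m ltac:(nia) ltac:(nia) Hm_local) as [a [b [g Hfm]]].
  rewrite Hm, Z.mul_comm.
  destruct (Zdivide_dec l m) as [Hlm | Hlm].
  - exists a, b, g. apply rel_prime_mult.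
    + apply rel_prime_sym. exact (rel_prime_div _ _ _ (rel_prime_sym _ _ Hfm) Hlm).
    + exact Hfm.
  - apply rel_prime_value_mul.
    + exact (prime_rel_prime l Hl m Hlm).
    + destruct (Hlocal l Hl ltac:(rewrite Hm; apply Z.divide_factor_r))
        as [a1 [b1 [g1 H1]]].
      exists a1, b1, g1. exact (proj2 (prime_rel_prime_iff l _ Hl) H1).
    + exists a, b, g. exact Hfm.
Qed.

End CongruenceRespectingMaps.

Lemma Delta_congr (p1 p2 p3 p4 : Z) : forall m a b g x y z,
  (m | Delta p1 p2 p3 p4 (a + m * x) (b + m * y) (g + m * z)
       - Delta p1 p2 p3 p4 a b g).
Proof.
  intros m a b g x y z.
  exists (y * qA p1 p2 p3 p4 + 2 * (z - x) * qB p1 p2 p3 p4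
          + (- 2 * b * y - m * y^2 + 4 * a * z + 4 * x * g + 4 * m * x * z)
            * qC p1 p2 p3 p4).
  unfold Delta. ring.
Qed.

Lemma qA_qB_qC_sum_of_squares (p1 p2 p3 p4 : Z) :
  qA p1 p2 p3 p4 ^ 2 + (2 * qB p1 p2 p3 p4) ^ 2 + 4 * qC p1 p2 p3 p4 ^ 2
  = (p1^2 + p2^2 + p3^2 + p4^2) ^ 2.
Proof. unfold qA, qB, qC. ring. Qed.

Lemma Delta_not_divisible (l p1 p2 p3 p4 : Z) : prime l ->
  ~ (l | p1^2 + p2^2 + p3^2 + p4^2) ->
  exists a b g, ~ (l | Delta p1 p2 p3 p4 a b g).
Proof.
  intros Hl Hlp.
  destruct (Zdivide_dec l (Delta p1 p2 p3 p4 0 1 0)) as [HA | HA];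
    [| now exists 0, 1, 0].
  destruct (Zdivide_dec l (Delta p1 p2 p3 p4 0 0 0)) as [HC | HC];
    [| now exists 0, 0, 0].
  destruct (Zdivide_dec l (Delta p1 p2 p3 p4 0 0 1)) as [HBC | HBC];
    [| now exists 0, 0, 1].
  exfalso. apply Hlp.
  replace (Delta p1 p2 p3 p4 0 1 0) with (qA p1 p2 p3 p4) in HA by (unfold Delta; ring).
  replace (Delta p1 p2 p3 p4 0 0 0) with (qC p1 p2 p3 p4) in HC by (unfold Delta; ring).
  replace (Delta p1 p2 p3 p4 0 0 1) with (2 * qB p1 p2 p3 p4 + qC p1 p2 p3 p4) in HBC
    by (unfold Delta; ring).
  assert (H2B : (l | 2 * qB p1 p2 p3 p4)).
  { replace (2 * qB p1 p2 p3 p4) with (2 * qB p1 p2 p3 p4 + qC p1 p2 p3 p4 - qC p1 p2 p3 p4)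
      by ring.
    exact (Z.divide_sub_r _ _ _ HBC HC). }
  assert (Hsq : (l | (p1^2 + p2^2 + p3^2 + p4^2) * (p1^2 + p2^2 + p3^2 + p4^2))).
  { rewrite <- Z.pow_2_r, <- qA_qB_qC_sum_of_squares, !Z.pow_2_r.
    repeat apply Z.divide_add_r.
    - exact (Z.divide_mul_r _ _ _ HA).
    - exact (Z.divide_mul_r _ _ _ H2B).
    - exact (Z.divide_mul_r _ _ _ (Z.divide_mul_r _ _ _ HC)). }
  destruct (prime_mult l Hl _ _ Hsq); assumption.
Qed.

Theorem proposition3p1 (p q p1 p2 p3 p4 : Z) :
  1 <= p -> 1 <= q -> Z.gcd p q = 1 ->
  0 <= p1 -> 0 <= p2 -> 0 <= p3 -> 0 <= p4 ->
  p = p1^2 + p2^2 + p3^2 + p4^2 ->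
  exists a b g : Z, Z.gcd (Delta p1 p2 p3 p4 a b g) q = 1.
Proof.
  intros _ Hq Hpq _ _ _ _ Hp.
  assert (Hlocal : forall l, prime l -> (l | q) ->
            exists a b g, ~ (l | Delta p1 p2 p3 p4 a b g)).
  { intros l Hl Hlq. apply Delta_not_divisible; [exact Hl|]. rewrite <- Hp.
    apply (prime_rel_prime_iff l p Hl), rel_prime_sym.
    exact (rel_prime_div _ _ _ (rel_prime_sym _ _ (proj1 (Zgcd_1_rel_prime p q) Hpq)) Hlq). }
  destruct (rel_prime_value_of_prime_divisors _ (Delta_congr p1 p2 p3 p4) q Hq Hlocal)
    as [a [b [g H]]].
  exists a, b, g. apply Zgcd_1_rel_prime, H.
Qed.
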